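(* Fix $n,L\ge1$, $a_0\in\mathbb{R}^L_{++}$ with $\sum_\ell a_{0,\ell}=1$, and vectors $\hat b_\ell=(\hat b_{\ell,0},\dots,\hat b_{\ell,L})\ge0$ ($\ell=1,\dots,L$) with $\hat b_{\ell,0}>0$ and $\sum_{\ell'=0}^L\hat b_{\ell,\ell'}=1$. There exists $\bar\varepsilon>0$ such that, whenever the requirements are $b_\ell=(1-\varepsilon_\ell)\hat b_\ell$ with $\varepsilon_\ell\in(0,\bar\varepsilon)$ for all $\ell$, every $\mathcal{Q}$-clustered structure $a^{\mathcal{Q}}$ (for every partition $\mathcal{Q}$ of $\{1,\dots,n\}$) is a Nash equilibrium of the $n$-fold replicate game $\mathcal{G}^n(a_0,b)$.
   Context: Base game: sectors $0$ (labor) and $1,\dots,L$; household consumption shares $a_0\in\mathbb{R}^L_{++}$, $\sum a_{0,\ell}=1$; sector-$\ell$ requirements $b_\ell=(b_{\ell,0},\dots,b_{\ell,L})\ge0$, $b_{\ell,0}>0$, $\sum_{\ell'}b_{\ell,\ell'}\le1$. The $n$-fold replicate $\mathcal{G}^n(a_0,b)$: firms $M=\{1,\dots,nL\}$, $M_\ell=\{(\ell-1)n+1,\dots,\ell n\}$ (firm $(\ell-1)n+c$ is the sector-$\ell$ firm of country $c\in\{1,\dots,n\}$); household share $a_{0,i}=a_{0,\ell}/n$ for $i\in M_\ell$; every $i\in M_\ell$ has requirement vector $b_\ell$ and $\varepsilon_i=1-\sum_{\ell'}b_{\ell,\ell'}$. Firm $i$ chooses $a_i\in S_i=\{a_i\in\mathbb{R}^{M\cup\{0\}}_+: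 a_{i,0}=b_{\ell,0},\ \sum_{j\in M_{\ell'}}a_{i,j}=b_{\ell,\ell'}\ \forall\ell'\ge1\}$ and receives payoff $\pi_i(a)=\varepsilon_i\bar v_i$, where $\bar v$ solves $\bar v_j=a_{0,j}+a_{0,j}\sum_k\varepsilon_k\bar v_k+\sum_ka_{k,j}\bar v_k$ ($j\in M$), $\sum_ka_{k,0}\bar v_k=1$. For a partition $\mathcal{Q}=\{Q_1,\dots,Q_K\}$ of $\{1,\dots,n\}$ let $Q_{\ell,k}=\{(\ell-1)n+c:c\in Q_k\}$. The $\mathcal{Q}$-clustered structure $a^{\mathcal{Q}}$: for $i\in Q_{\ell,k}$, $a_{i,0}=b_{\ell,0}$, $a_{i,i}=b_{\ell,\ell}$, $a_{i,j}=0$ for $j\in Q_{\ell,k}\setminus\{i\}$, $a_{i,j}=b_{\ell,\ell'}/|Q_k|$ for $j\in Q_{\ell',k}$ with $\ell'\notin\{0,\ell\}$, and $a_{i,j}=0$ otherwise. *)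

From HB Require Import structures.
From mathcomp Require Import all_boot all_order all_algebra.
From mathcomp Require Import reals.
Set Implicit Arguments. Unset Strict Implicit. Unset Printing Implicit Defensive.
Import Order.TTheory GRing.Theory Num.Theory.
Local Open Scope ring_scope.

Section Game.
Variables (R : realType) (n L : nat).
(* household consumption shares over sectors 1..L (indexed by 'I_L) *)
Variable a0 : 'I_L -> R.
(* requirements: b0 l = b_{l,0} (labor), b l l' = b_{l,l'} *)
Variable b0 : 'I_L -> R.
Variable b : 'I_L -> 'I_L -> R.

(* firm (l, c) = sector-l firm of country c *)
Definition firm : finType := ('I_L * 'I_n)%type.

(* a strategy of a firm is a vector in R^{M ∪ {0}}; None = labor (index 0) *)
Definition strategy := option firm -> R.
Definition profile := firm -> strategy.

Definition hshare (i : firm) : R := a0 i.1 / n%:R.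

Definition eps_firm (i : firm) : R := 1 - (b0 i.1 + \sum_(l' < L) b i.1 l').

Definition in_S (i : firm) (s : strategy) : Prop :=
  (forall j, 0 <= s j) /\ s None = b0 i.1 /\
  (forall l' : 'I_L, \sum_(c < n) s (Some (l', c)) = b i.1 l').

Definition is_value (a : profile) (v : firm -> R) : Prop :=
  (forall j : firm,
     v j = hshare j + hshare j * (\sum_(k : firm) eps_firm k * v k)
           + \sum_(k : firm) a k (Some j) * v k) /\
  \sum_(k : firm) a k None * v k = 1.

Definition upd (a : profile) (i : firm) (s : strategy) : profile :=
  fun k => if k == i then s else a k.

(* payoff pi_i(a) = eps_i * vbar_i, where vbar is the (unique) solution of the
   value system; Nash equilibrium: every a_i in S_i and no profitable
   unilateral deviation *)
Definition Nash (a : profile) : Prop :=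
  (forall i, in_S i (a i)) /\
  forall (i : firm) (s : strategy), in_S i s ->
  forall v v' : firm -> R, is_value a v -> is_value (upd a i s) v' ->
    eps_firm i * v' i <= eps_firm i * v i.

Definition clustered (Q : {set {set 'I_n}}) : profile :=
  fun i => fun j =>
    match j with
    | None => b0 i.1
    | Some (l', c') =>
        let B := pblock Q i.2 in
        if c' \in B then
          (if l' == i.1 then (if c' == i.2 then b i.1 i.1 else 0)
           else b i.1 l' / #|B|%:R)
        else 0
    end.
End Game.

From HB Require Import structures.
From mathcomp Require Import all_boot all_order all_algebra.
From mathcomp Require Import reals.
From mathcomp Require Import ring lra.
Set Implicit Arguments. Unset Strict Implicit. Unset Printing Implicit Defensive.
Import Order.TTheory GRing.Theory Num.Theory.
Local Open Scope ring_scope.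

(* The value of firm [i] can be read off a dual object.  If [g] solves the adjoint
   system [g k = [k = i] + sum_j a_kj g_j + eps_k (h . g)], pairing it with the value
   equations gives [v i = h . g] for the profile [a], and
   [v' i * (1 + a_i . g - s . g) = h . g] after a unilateral deviation [s] of [i].
   So no deviation pays as soon as [h . g >= 0] and [a_i] already buys where [g] is
   largest.
   For a clustered structure the adjoint is explicit: the Leontief column of firm [i]
   (the output of [i] embodied in one unit of each firm), which vanishes outside the
   block of [i], is constant across the block within each sector and is largest at
   [i] itself, plus a multiple of the sector-level solution of [p = eps + b p] that
   absorbs the household feedback; [s . p] only depends on sector totals.  The
   clustered purchases of [i] therefore maximise [s . g].  All these linear systems
   are substochastic, so they are solvable with solutions of the right sign by a
   maximum principle.  No smallness of [eps] is needed: [epsbar = 1] works. *)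

Section Substochastic.
Variables (R : realFieldType) (T : finType) (M : T -> T -> R).
Hypotheses (M_ge0 : forall k j, 0 <= M k j) (M_row_lt1 : forall k, \sum_j M k j < 1).

Lemma substoch_max_principle (x y : T -> R) :
  (forall k, y k <= 0) -> (forall k, x k <= y k + \sum_j M k j * x j) ->
  forall k, x k <= 0.
Proof.
move=> y_le0 hx k.
have [km _ kmax] := @arg_maxP _ R T k predT x erefl.
apply: le_trans (kmax k erefl) _; rewrite leNgt; apply/negP => xkm_gt0.
have h : x km <= (\sum_j M km j) * x km.
  rewrite mulr_suml; apply: le_trans (hx km) _; rewrite -[leRHS]add0r lerD //.
  by apply: ler_sum => j _; apply: ler_wpM2l => //; apply: kmax.
by rewrite leNgt (gtr_pMl _ xkm_gt0) M_row_lt1 in h.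
Qed.

Lemma substoch_fixpoint_ge0 (x y : T -> R) :
  (forall k, 0 <= y k) -> (forall k, x k = y k + \sum_j M k j * x j) ->
  forall k, 0 <= x k.
Proof.
move=> y_ge0 hx k; rewrite -oppr_le0.
apply: (@substoch_max_principle (fun k => - x k) (fun k => - y k)) => [j|j].
  by rewrite oppr_le0.
by rewrite hx opprD -sumrN; under eq_bigr do rewrite -mulrN.
Qed.

Lemma substoch_fixpoint_lt1 (x y : T -> R) :
  (forall k, y k + \sum_j M k j < 1) -> (forall k, x k = y k + \sum_j M k j * x j) ->
  forall k, x k < 1.
Proof.
move=> y_lt1 hx.
have x_le1 k : x k <= 1.
  rewrite -subr_le0; apply: (@substoch_max_principle (fun k => x k - 1)
    (fun k => y k + \sum_j M k j - 1)) => [j|j]; first by rewrite subr_le0 ltW.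
  have -> : \sum_l M j l * (x l - 1) = \sum_l M j l * x l - \sum_l M j l.
    by rewrite -sumrB; apply: eq_bigr => l _; rewrite mulrBr mulr1.
  rewrite {1}hx; lra.
move=> k; rewrite hx; apply: le_lt_trans (y_lt1 k); rewrite lerD2l.
by apply: ler_sum => j _; rewrite ler_piMr.
Qed.

End Substochastic.

Lemma substoch_fixpoint_exists (R : realFieldType) (m : nat) (M : 'I_m -> 'I_m -> R)
    (y : 'I_m -> R) :
  (forall k j, 0 <= M k j) -> (forall k, \sum_j M k j < 1) ->
  exists x : 'I_m -> R, forall k, x k = y k + \sum_j M k j * x j.
Proof.
move=> M_ge0 M_row_lt1.
pose A : 'M[R]_m := \matrix_(i, j) ((i == j)%:R - M j i).
have mulA (w : 'rV[R]_m) k : (w *m A) 0 k = w 0 k - \sum_j M k j * w 0 j.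
  rewrite mxE; under eq_bigr do rewrite mxE mulrBr.
  rewrite sumrB (bigD1 k) //= eqxx mulr1 big1 ?addr0 => [|j /negbTE ->]; last by rewrite mulr0.
  by congr (_ - _); apply: eq_bigr => j _; rewrite mulrC.
have A_inj (v : 'rV[R]_m) : v *m A = 0 -> v = 0.
  move=> vA0; have v_fix j : v 0 j = 0 + \sum_i M j i * v 0 i.
    by apply/eqP; rewrite add0r -subr_eq0 -mulA vA0 mxE.
  apply/rowP => j; rewrite mxE; apply/eqP; rewrite eq_le.
  rewrite (@substoch_max_principle _ _ M M_ge0 M_row_lt1 (v 0) (fun=> 0)) => [|//|k]; last by rewrite -v_fix.
  exact: (@substoch_fixpoint_ge0 _ _ M M_ge0 M_row_lt1 (v 0) (fun=> 0)).
have A_unit : A \in unitmx.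
  rewrite unitmxE unitfE; apply/negP => /det0P [v v_neq0 /A_inj v0].
  by rewrite v0 eqxx in v_neq0.
exists (fun k => ((\row_j y j) *m invmx A) 0 k) => k.
have := congr1 (fun w : 'rV[R]_m => w 0 k) (mulmxKV A_unit (\row_j y j)).
by rewrite /= mulA mxE => <-; rewrite subrK.
Qed.

Lemma sum_mul_if_eq (R : pzSemiRingType) (T : finType) (F : T -> R) (x : T) (c : R) :
  \sum_j F j * (if j == x then c else 0) = F x * c.
Proof. by rewrite (bigD1 x) //= eqxx big1 ?addr0 // => j /negbTE ->; rewrite mulr0. Qed.

Lemma sum_firm (R : realType) (n L : nat) (F : firm n L -> R) :
  \sum_(k : firm n L) F k = \sum_(l < L) \sum_(c < n) F (l, c).
Proof. by rewrite pair_big; apply: eq_bigr => -[]. Qed.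

Section ValueSystem.
Variables (R : realType) (n L : nat) (a0 b0 : 'I_L -> R) (b : 'I_L -> 'I_L -> R).
Local Notation firm := (firm n L).
Local Notation eps := (eps_firm b0 b).

Definition cost (s : strategy R n L) (g : firm -> R) : R := \sum_(j : firm) s (Some j) * g j.

Definition household_cost (g : firm -> R) : R := \sum_(j : firm) hshare a0 j * g j.

Definition sector_eps (l : 'I_L) : R := 1 - (b0 l + \sum_(l' < L) b l l').

Definition is_adjoint (a : profile R n L) (i : firm) (g : firm -> R) : Prop :=
  forall k, g k = (k == i)%:R + cost (a k) g + eps k * household_cost g.

Lemma in_S_sector_sum (i : firm) (s : strategy R n L) (f : 'I_L -> R) :
  in_S b0 b i s -> cost s (fun j => f j.1) = \sum_l b i.1 l * f l.
Proof.
case=> _ [_ s_sector]; rewrite /cost sum_firm; apply: eq_bigr => l _.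
by rewrite -s_sector mulr_suml.
Qed.

Lemma in_S_sector_resolvent (P : 'I_L -> R) (i : firm) (s : strategy R n L) :
  (forall l, P l = sector_eps l + \sum_l' b l l' * P l') ->
  in_S b0 b i s -> cost s (fun j => P j.1) = P i.1 - eps i.
Proof.
move=> P_fix s_in; rewrite (in_S_sector_sum P s_in) [P i.1]P_fix.
by rewrite /eps_firm /sector_eps; ring.
Qed.

Lemma household_cost_sector (P : 'I_L -> R) : (0 < n)%N ->
  household_cost (fun j => P j.1) = \sum_l a0 l * P l.
Proof.
move=> n_gt0; rewrite /household_cost sum_firm; apply: eq_bigr => l _.
rewrite /hshare /= sumr_const card_ord -(mulr_natr (_ * P l)) mulrAC divfK //.
by rewrite pnatr_eq0 -lt0n.
Qed.

Lemma value_pairing (a : profile R n L) (w g : firm -> R) : is_value a0 b0 b a w ->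
  \sum_k w k * (g k - cost (a k) g - eps k * household_cost g) = household_cost g.
Proof.
case=> w_eq _; set G := household_cost g; set E := \sum_k eps k * w k.
have wg : \sum_k w k * g k = G + G * E + \sum_k w k * cost (a k) g.
  transitivity (\sum_j (hshare a0 j * g j + hshare a0 j * g j * E
      + g j * \sum_k a k (Some j) * w k)).
    by apply: eq_bigr => j _; rewrite [w j]w_eq -/E; ring.
  rewrite !big_split /= -mulr_suml; congr (_ + _).
  under eq_bigr do rewrite mulr_sumr; rewrite exchange_big /=.
  by apply: eq_bigr => k _; rewrite /cost mulr_sumr; apply: eq_bigr => j _; ring.
have wE : \sum_k w k * (eps k * G) = G * E.
  by rewrite mulr_sumr; apply: eq_bigr => k _; ring.
rewrite (eq_bigr (fun k => w k * g k - w k * cost (a k) g - w k * (eps k * G)));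
  last by move=> k _; ring.
by rewrite !sumrB wE wg; ring.
Qed.

Lemma adjoint_value (a : profile R n L) (i : firm) (g v : firm -> R) :
  is_adjoint a i g -> is_value a0 b0 b a v -> v i = household_cost g.
Proof.
move=> adj /(value_pairing g) <-.
rewrite (bigD1 i) //= big1 => [|k /negbTE k_neq_i]; last first.
  by rewrite [g k]adj k_neq_i /=; ring.
by rewrite [g i]adj eqxx /=; ring.
Qed.

Lemma adjoint_deviation (a : profile R n L) (i : firm) (s : strategy R n L)
    (g v : firm -> R) :
  is_adjoint a i g -> is_value a0 b0 b (upd a i s) v ->
  v i * (1 + cost (a i) g - cost s g) = household_cost g.
Proof.
move=> adj /(value_pairing g) <-.
have upd_cost k : cost (upd a i s k) g = if k == i then cost s g else cost (a k) g.
  by rewrite /upd; case: (k == i).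
rewrite (bigD1 i) //= big1 => [|k /negbTE k_neq_i]; last first.
  by rewrite upd_cost k_neq_i [g k]adj k_neq_i /=; ring.
by rewrite upd_cost eqxx [g i]adj eqxx /=; ring.
Qed.

Lemma adjoint_no_profitable_deviation (a : profile R n L) (i : firm)
    (s : strategy R n L) (g v v' : firm -> R) :
  is_adjoint a i g -> 0 <= household_cost g -> 0 <= eps i -> cost s g <= cost (a i) g ->
  is_value a0 b0 b a v -> is_value a0 b0 b (upd a i s) v' -> eps i * v' i <= eps i * v i.
Proof.
move=> adj G_ge0 eps_ge0 s_le v_val v'_val; apply: ler_wpM2l => //.
move: G_ge0; rewrite (adjoint_value adj v_val) -(adjoint_deviation adj v'_val).
move: s_le; move: (v' i) (cost (a i) g) (cost s g) => x d c; nra.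
Qed.

Definition adjoint_of (q p : firm -> R) (j : firm) : R :=
  q j + p j * (household_cost q / (1 - household_cost p)).

Lemma cost_adjoint_of (s : strategy R n L) (q p : firm -> R) :
  cost s (adjoint_of q p) = cost s q + cost s p * (household_cost q / (1 - household_cost p)).
Proof.
rewrite /cost /adjoint_of; under eq_bigr do rewrite mulrDr mulrA.
by rewrite big_split /= -mulr_suml.
Qed.

Lemma household_cost_adjoint_of (q p : firm -> R) : household_cost p != 1 ->
  household_cost (adjoint_of q p) = household_cost q / (1 - household_cost p).
Proof.
move=> hp_neq1; rewrite {1}/household_cost /adjoint_of.
under eq_bigr do rewrite mulrDr mulrA.
rewrite big_split /= -mulr_suml -/(household_cost q) -/(household_cost p).
by field; rewrite subr_eq0 eq_sym.
Qed.

Lemma adjoint_ofP (a : profile R n L) (i : firm) (q p : firm -> R) :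
  (forall k, cost (a k) q = q k - (k == i)%:R) -> (forall k, cost (a k) p = p k - eps k) ->
  household_cost p != 1 -> is_adjoint a i (adjoint_of q p).
Proof.
move=> q_res p_res hp_neq1 k.
rewrite household_cost_adjoint_of // cost_adjoint_of q_res p_res /adjoint_of; ring.
Qed.

End ValueSystem.

Section Clustered.
Variables (R : realType) (n L : nat) (a0 b0 : 'I_L -> R) (b : 'I_L -> 'I_L -> R).
Variable Q : {set {set 'I_n}}.
Hypotheses (n_gt0 : (0 < n)%N) (a0_gt0 : forall l, 0 < a0 l) (a0_sum1 : \sum_l a0 l = 1).
Hypotheses (b0_gt0 : forall l, 0 < b0 l) (b_ge0 : forall l l', 0 <= b l l')
  (b_row_le1 : forall l, b0 l + \sum_l' b l l' <= 1).
Hypothesis Q_partition : partition Q [set: 'I_n].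
Local Notation firm := (firm n L).
Local Notation a := (clustered b0 b Q).
Local Notation eps := (eps_firm b0 b).

Lemma b_row_lt1 l : \sum_l' b l l' < 1.
Proof. by apply: lt_le_trans (b_row_le1 l); rewrite ltrDr. Qed.

Lemma b_diag_lt1 l : b l l < 1.
Proof.
apply: le_lt_trans (b_row_lt1 l); rewrite (bigD1 l) //= lerDl.
by apply: sumr_ge0 => l' _.
Qed.

Lemma sector_eps_ge0 l : 0 <= sector_eps b0 b l.
Proof. by rewrite subr_ge0. Qed.

Lemma sector_eps_row_lt1 l : sector_eps b0 b l + \sum_l' b l l' < 1.
Proof. by have := b0_gt0 l; rewrite /sector_eps; lra. Qed.

Lemma household_cost_sector_lt1 (P : 'I_L -> R) :
  (forall l, P l < 1) -> household_cost a0 (fun j : firm => P j.1) < 1.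
Proof.
move=> P_lt1; rewrite household_cost_sector // -a0_sum1; apply: ltr_sum => [|l _].
  have : \sum_l a0 l != 0 by rewrite a0_sum1 oner_neq0.
  by rewrite psumr_neq0 => [|l _]; [apply: sub_has | exact: ltW].
by rewrite gtr_pMr.
Qed.

Lemma pblock_self c : c \in pblock Q c.
Proof. by case/and3P: Q_partition => /eqP cover_Q _ _; rewrite mem_pblock cover_Q inE. Qed.

Lemma mem_pblockE c x : (x \in pblock Q c) = (pblock Q c == pblock Q x).
Proof.
case/and3P: Q_partition => /eqP cover_Q triv_Q _.
by rewrite eq_pblock // cover_Q inE.
Qed.

Lemma mem_pblockC c x : (x \in pblock Q c) = (c \in pblock Q x).
Proof. by rewrite !mem_pblockE eq_sym. Qed.

Lemma clusteredE (k : firm) (l : 'I_L) (c : 'I_n) :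
  a k (Some (l, c)) =
  if c \in pblock Q k.2 then
    (if l == k.1 then (if c == k.2 then b k.1 k.1 else 0) else b k.1 l / #|pblock Q k.2|%:R)
  else 0.
Proof. by []. Qed.

Lemma clustered_outside (k j : firm) : j.2 \notin pblock Q k.2 -> a k (Some j) = 0.
Proof. by case: j => l c; rewrite clusteredE /= => /negbTE ->. Qed.

Lemma clustered_in_S (k : firm) : in_S b0 b k (a k).
Proof.
split; [|split] => //.
  case=> [[l c]|]; last exact: ltW (b0_gt0 k.1).
  rewrite clusteredE; case: ifP => // _; case: ifP => _; first by case: ifP.
  by rewrite divr_ge0.
move=> l; case: (eqVneq l k.1) => [->|l_neq].
  rewrite (bigD1 k.2) // big1 => [|c c_neq]; last first.
    by rewrite clusteredE (negbTE c_neq) eqxx if_same.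
  by rewrite clusteredE pblock_self !eqxx /= addr0.
under eq_bigr do rewrite clusteredE (negbTE l_neq).
rewrite -big_mkcond /= sumr_const -[LHS]mulr_natr divfK // pnatr_eq0 -lt0n.
by apply/card_gt0P; exists k.2; apply: pblock_self.
Qed.

Lemma clustered_restrict (k : firm) (c : 'I_n) (f : firm -> R) :
  \sum_(j : firm) a k (Some j) * (if j.2 \in pblock Q c then f j else 0) =
  if k.2 \in pblock Q c then cost (a k) f else 0.
Proof.
have termwise j : a k (Some j) * (if j.2 \in pblock Q c then f j else 0) =
    if k.2 \in pblock Q c then a k (Some j) * f j else 0.
  have [j_in|j_out] := boolP (j.2 \in pblock Q k.2); last first.
    by rewrite clustered_outside // !mul0r !if_same.
  move: j_in; rewrite !(mem_pblockE c) mem_pblockE => /eqP->.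
  by case: ifP; rewrite ?mulr0.
rewrite (eq_bigr _ (fun j _ => termwise j)); case: ifP => // _.
exact: big1_eq.
Qed.

Section Firm.
Variables (i : firm) (Y : 'I_L -> R).
Local Notation B := (pblock Q i.2).

Definition own_multiplier : R := (1 - b i.1 i.1)^-1.

(* A sector-[l] firm of the block buys [b l i.1 / #|B|] from [i] directly; the own-input
   loop of [i] multiplies what reaches [i] by [own_multiplier]. *)
Definition cluster_demand (l : 'I_L) : R :=
  if l == i.1 then 0 else b l i.1 * own_multiplier / #|B|%:R.

Hypothesis Y_fix : forall l, Y l = cluster_demand l + \sum_l' b l l' * Y l'.

(* [flow_to j] is the amount of firm [i]'s output embodied, directly and through
   the whole supply chain of the clustered structure, in one unit of firm [j]'s
   output (a column of the Leontief inverse); [Y l] is its value at the sector-[l]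
   firms of [i]'s block. *)
Definition flow_to (j : firm) : R :=
  (if j.2 \in B then Y j.1 else 0) + (if j == i then own_multiplier else 0).

Lemma own_multiplier_gt0 : 0 < own_multiplier.
Proof. by rewrite invr_gt0 subr_gt0 b_diag_lt1. Qed.

Lemma own_multiplierE : b i.1 i.1 * own_multiplier = own_multiplier - 1.
Proof. by rewrite /own_multiplier; field; rewrite subr_eq0 eq_sym lt_eqF ?b_diag_lt1. Qed.

Lemma cluster_demand_ge0 l : 0 <= cluster_demand l.
Proof.
rewrite /cluster_demand; case: ifP => // _.
by rewrite divr_ge0 // mulr_ge0 // ltW // own_multiplier_gt0.
Qed.

Lemma block_flow_ge0 l : 0 <= Y l.
Proof. exact: (substoch_fixpoint_ge0 b_ge0 b_row_lt1 cluster_demand_ge0 Y_fix l). Qed.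

Lemma flow_to_ge0 j : 0 <= flow_to j.
Proof.
rewrite /flow_to addr_ge0 //; case: ifP => // _; first exact: block_flow_ge0.
exact: ltW own_multiplier_gt0.
Qed.

Lemma clustered_at_i (k : firm) : k.2 \in B ->
  a k (Some i) * own_multiplier = cluster_demand k.1 + (k == i)%:R * (own_multiplier - 1).
Proof.
move=> k_in; have i_in : i.2 \in pblock Q k.2 by rewrite mem_pblockC.
have Bk : pblock Q k.2 = B by move: k_in; rewrite mem_pblockE eq_sym => /eqP.
have -> : a k (Some i) = a k (Some (i.1, i.2)) by case: (i).
have -> : (k == i) = (k.1 == i.1) && (k.2 == i.2) by case: (k); case: (i).
rewrite clusteredE i_in Bk /cluster_demand [i.1 == k.1]eq_sym [i.2 == k.2]eq_sym.
case: (eqVneq k.1 i.1) => [->|_] /=; last by ring.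
by case: ifP => _ /=; rewrite ?own_multiplierE; ring.
Qed.

Lemma flow_to_resolvent (k : firm) : cost (a k) flow_to = flow_to k - (k == i)%:R.
Proof.
rewrite /cost /flow_to; under eq_bigr do rewrite mulrDr.
rewrite big_split (clustered_restrict k i.2 (fun j => Y j.1)) sum_mul_if_eq.
case: (boolP (k.2 \in B)) => [k_in|k_out].
  rewrite clustered_at_i // (in_S_sector_sum Y (clustered_in_S k)) [Y k.1]Y_fix.
  by case: (k == i) => /=; ring.
have k_neq_i : (k == i) = false by apply: contraNF k_out => /eqP ->; apply: pblock_self.
rewrite clustered_outside; last by rewrite mem_pblockC.
by rewrite k_neq_i /=; ring.
Qed.

Lemma flow_to_best (s : strategy R n L) : in_S b0 b i s -> cost s flow_to <= cost (a i) flow_to.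
Proof.
move=> s_in; rewrite flow_to_resolvent.
pose f l := Y l + (if l == i.1 then own_multiplier else 0).
apply: (@le_trans _ _ (cost s (fun j => f j.1))).
  apply: ler_sum => j _; apply: ler_wpM2l; first by case: s_in.
  apply: lerD; first by case: ifP => // _; apply: block_flow_ge0.
  have -> : (j == i) = (j.1 == i.1) && (j.2 == i.2) by case: (j); case: (i).
  case: (j.1 == i.1) => //=; case: ifP => // _; exact: ltW own_multiplier_gt0.
rewrite (in_S_sector_sum f s_in) /f; under eq_bigr do rewrite mulrDr.
rewrite big_split sum_mul_if_eq /flow_to pblock_self eqxx [Y i.1]Y_fix /cluster_demand eqxx.
by rewrite own_multiplierE /=; lra.
Qed.

End Firm.

Theorem clustered_Nash : Nash a0 b0 b a.
Proof.
split=> [|i s s_in v v' v_val v'_val]; first exact: clustered_in_S.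
have [P P_fix] := substoch_fixpoint_exists (sector_eps b0 b) b_ge0 b_row_lt1.
have [Y Y_fix] := substoch_fixpoint_exists (cluster_demand i) b_ge0 b_row_lt1.
pose p (j : firm) := P j.1; pose q := flow_to i Y.
have hp_lt1 : household_cost a0 p < 1.
  apply: household_cost_sector_lt1.
  exact: (substoch_fixpoint_lt1 b_ge0 b_row_lt1 sector_eps_row_lt1 P_fix).
have hq_ge0 : 0 <= household_cost a0 q.
  by apply: sumr_ge0 => j _; rewrite mulr_ge0 ?flow_to_ge0 // divr_ge0 // ltW.
have p_res k : cost (a k) p = p k - eps k.
  exact: (in_S_sector_resolvent P_fix (clustered_in_S k)).
apply: (adjoint_no_profitable_deviation (g := adjoint_of a0 q p) _ _ _ _ v_val v'_val).
- exact: (adjoint_ofP (flow_to_resolvent Y_fix) p_res (negbT (lt_eqF hp_lt1))).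
- by rewrite household_cost_adjoint_of ?(negbT (lt_eqF hp_lt1)) // divr_ge0 // subr_ge0 ltW.
- exact: sector_eps_ge0.
- rewrite !cost_adjoint_of p_res (in_S_sector_resolvent P_fix s_in) lerD2r.
  exact: flow_to_best.
Qed.

End Clustered.

Theorem mainTheorem10 (R : realType) (n L : nat) (hn : (0 < n)%N) (hL : (0 < L)%N)
  (a0 : 'I_L -> R) (ha0 : forall l, 0 < a0 l) (ha0sum : \sum_(l < L) a0 l = 1)
  (bh0 : 'I_L -> R) (bh : 'I_L -> 'I_L -> R)
  (hbh0 : forall l, 0 < bh0 l) (hbh : forall l l', 0 <= bh l l')
  (hbhsum : forall l, bh0 l + \sum_(l' < L) bh l l' = 1) :
  exists epsbar : R, 0 < epsbar /\
    forall eps : 'I_L -> R, (forall l, 0 < eps l < epsbar) ->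
    forall Q : {set {set 'I_n}}, partition Q [set: 'I_n] ->
      Nash a0 (fun l => (1 - eps l) * bh0 l) (fun l l' => (1 - eps l) * bh l l')
        (clustered (fun l => (1 - eps l) * bh0 l) (fun l l' => (1 - eps l) * bh l l') Q).
Proof.
exists 1; split => // eps eps_in Q Q_partition.
have eps_lt1 l : 0 < 1 - eps l by rewrite subr_gt0; case/andP: (eps_in l).
apply: clustered_Nash => // [l|l l'|l]; first exact: mulr_gt0.
  exact: mulr_ge0 (ltW (eps_lt1 l)) (hbh l l').
rewrite -mulr_sumr -mulrDr hbhsum mulr1 lerBlDr lerDl.
by case/andP: (eps_in l) => /ltW.
Qed.
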